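(* Let $D$ be a tournament missing disjoint paths of length 2, and let $C=a_1b_1c_1,\dots,a_kb_kc_k$ be a double cycle in $\Delta(D)$. Then there exists $s\in\{1,\dots,k\}$ such that $|N^+_{D[K(C)]}(a_s)|\le|N^{++}_{D[K(C)]}(a_s)|$ or $|N^+_{D[K(C)]}(c_s)|\le|N^{++}_{D[K(C)]}(c_s)|$.
   Context: All digraphs are finite oriented graphs; $D[X]$ is the subdigraph induced by $X$. $N^+_H(v)$ is the out-neighborhood in $H$; $N^{++}_H(v)$ is the set of vertices $w\notin N_H^+(v)\cup\{v\}$ with $u\to w$ in $H$ for some $u\in N_H^+(v)$. A missing edge is a pair of distinct non-adjacent vertices; the missing graph is formed by the missing edges. $D$ is a tournament missing disjoint paths of length 2 if its missing graph is a vertex-disjoint union of paths each with exactly two edges. For missing edges $\{x,y\},\{a,b\}$, $\{x,y\}$ loses to $\{a,b\}$ (written $xy\to ab$) if the endpoints can be labelled so that $x\to a$, $b\notin N^+(x)\cup N^{++}(x)$, $y\to b$, $a\notin N^+(y)\cup N^{++}(y)$ (neighborhoods in $D$). $\Delta(D)$ has the missing edges as vertices and arcs $(e,e')$ whenever $e$ loses to $e'$. For missing paths $abc$, $xyz$ (edges $ab,bc$ and $xy,yz$), $abc\to xyz$ means each of $ab,bc$ loses to each of $xy,yz$. A double cycle is a sequence $C=a_1b_1c_1,\dots,a_kb_kc_k$ ($k\ge2$) of distinct missing paths of length 2 (components of the missing graph) with $a_ib_ic_i\to a_{i+1}b_{i+1}c_{i+1}$ for all $i$, indices modulo $k$. $K(C)=\{a_i,b_i,c_i: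 1\le i\le k\}$. *)

From mathcomp Require Import all_boot.
Set Implicit Arguments. Unset Strict Implicit. Unset Printing Implicit Defensive.

Section Defs.
Variables (V : finType) (adj : rel V).
(* adj x y  means the arc x -> y of the digraph D on vertex set V. *)

Definition oriented : Prop :=
  (forall x, ~~ adj x x) /\ (forall x y, adj x y -> ~~ adj y x).

Definition missing (x y : V) : bool := [&& x != y, ~~ adj x y & ~~ adj y x].

(* a-b-c is a whole component of the missing graph which is a path with
   exactly two edges ab, bc. *)
Definition missing_P3 (a b c : V) : Prop :=
  [/\ missing a b, missing b c, a != c, ~~ missing a c &
      forall v, (missing a v -> v = b) /\ (missing c v -> v = b) /\
                (missing b v -> v = a \/ v = c)].

Definition tournament_missing_disjoint_P2 : Prop :=
  oriented /\
  forall x y, missing x y -> exists a b c, missing_P3 a b c /\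
     [\/ (x, y) = (a, b), (x, y) = (b, a), (x, y) = (b, c) | (x, y) = (c, b)].

(* Out-neighbourhood and second out-neighbourhood of v in the induced
   subdigraph D[S]. *)
Definition outN (S : {set V}) (v : V) : {set V} := [set w in S | adj v w].
Definition out2N (S : {set V}) (v : V) : {set V} :=
  [set w in S | [&& w \notin outN S v, w != v & [exists u in outN S v, adj u w]]].

(* labelled version of "x y loses to a b" (neighbourhoods in D itself) *)
Definition loses_lab (x y a b : V) : bool :=
  [&& adj x a, b \notin outN setT x :|: out2N setT x, adj y b &
      a \notin outN setT y :|: out2N setT y].

Definition loses (x y a b : V) : bool :=
  [|| loses_lab x y a b, loses_lab y x a b, loses_lab x y b a | loses_lab y x b a].

Definition path_loses (a b c x y z : V) : bool :=
  [&& loses a b x y, loses a b y z, loses b c x y & loses b c y z].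

(* C = a_0 b_0 c_0, ..., a_{k-1} b_{k-1} c_{k-1} is a double cycle
   (0-based indices, taken modulo k). *)
Definition double_cycle (k : nat) (a b c : nat -> V) : Prop :=
  [/\ 2 <= k,
      (forall i, i < k -> missing_P3 (a i) (b i) (c i)),
      (forall i j, i < k -> j < k -> i != j ->
         [set a i; b i; c i] != [set a j; b j; c j]) &
      (forall i, i < k -> path_loses (a i) (b i) (c i)
                    (a (i.+1 %% k)) (b (i.+1 %% k)) (c (i.+1 %% k)))].

Definition KC (k : nat) (a b c : nat -> V) : {set V} :=
  [set v | [exists i : 'I_k, [|| v == a i, v == b i | v == c i]]].

End Defs.

From mathcomp Require Import all_boot zify.

Set Implicit Arguments. Unset Strict Implicit. Unset Printing Implicit Defensive.

(* Two consecutive paths abc -> xyz of a double cycle are either "parallel"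
   (a, c beat x, z and b beats y) or "crossed" (a, c beat y and b beats x, z),
   each arc coming with the matching non-reachability conditions.  Pushing these
   around the cycle shows that every vertex u outside the i-th path sees it
   uniformly: either both ends beat u and u beats the middle, or conversely.
   Let e_i be the end of the i-th path beaten by the other end.  Uniformity gives
   exactly 1 + [e_i -> e_j] out-neighbours of e_i in the j-th path, so the
   out-degrees d_i of the e_i in D[K(C)] sum to 3k(k-1)/2.  For the next path
   there is a w with e_i -> w and w outside N^+ and N^{++} of b_i; every vertex
   of a further path beating e_i is beaten by b_i, hence by w, so it lies in
   N^{++}(e_i), and so does b_i.  This gives
   |N^{++}(e_i)| >= 3k - 5 - d_i + |N^+(e_i) /\ P_{i+1}|.  Take i with d_i
   minimal: if e_i -> e_{i+1} the last term is 2 and 2 d_i <= 3(k-1); otherwise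
   the pair is crossed, d_i < d_{i+1} and 2 d_i < 3(k-1).  Either way
   d_i <= |N^{++}(e_i)|. *)

Lemma card_disjointU_sub (T : finType) (A B C : {set T}) :
  {in A, forall v, v \notin B} -> A :|: B \subset C -> #|A| + #|B| <= #|C|.
Proof.
move=> AnB /subset_leq_card; rewrite -cardsUI; apply: leq_trans.
suff -> : A :&: B = set0 by rewrite cards0 addn0.
by apply/setP => v; rewrite !inE; apply/negP => /andP[/AnB/negP].
Qed.

Lemma modn_lt_double m k : m < k + k -> m %% k = if m < k then m else m - k.
Proof.
case: ifP => [mk _|km mkk]; first by rewrite modn_small.
have -> : m = m - k + k by lia.
by rewrite modnDr modn_small; lia.
Qed.

Lemma modn_offset k i j : i < k -> j < k -> i != j ->
  exists2 r, 0 < r < k & i = (j + r) %% k.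
Proof.
move=> ik jk nij; case: (ltngtP i j) => [ij|ji|]; last by move/eqP; rewrite (negbTE nij).
- exists (k + i - j); first lia.
  have -> : j + (k + i - j) = i + k by lia.
  by rewrite modnDr modn_small.
- by exists (i - j); [lia | rewrite subnKC ?modn_small //; lia].
Qed.

Lemma sum_pairs_const n m (G : nat -> nat -> nat) :
  (forall i, i < n -> G i i = 0) ->
  (forall i j, i < n -> j < n -> i != j -> G i j + G j i = m) ->
  2 * \sum_(i < n) \sum_(j < n) G i j = m * (n * n.-1).
Proof.
move=> G0 Gm.
have -> : 2 * \sum_(i < n) \sum_(j < n) G i j = \sum_(i < n) \sum_(j < n) (G i j + G j i).
  by rewrite mul2n -addnn {2}exchange_big -big_split; apply: eq_bigr => i _; rewrite big_split.
rewrite mulnCA -[X in X * _]card_ord -sum_nat_const; apply: eq_bigr => i _.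
rewrite (bigD1 i) //= G0 // add0n.
rewrite (eq_bigr (fun=> m)) => [|j nji]; last by rewrite Gm // eq_sym.
by rewrite sum_nat_const cardC1 card_ord mulnC.
Qed.

Lemma card_sep3 (T : finType) (p : pred T) x y z : x != y -> x != z -> y != z ->
  #|[set w in [set x; y; z] | p w]| = p x + p y + p z.
Proof.
move=> xy xz yz.
rewrite (cardsD1 x) (cardsD1 y) (cardsD1 z) !inE !eqxx ![y == _]eq_sym ![z == _]eq_sym.
rewrite xy xz yz !orbT /=.
suff -> : #|[set w in [set x; y; z] | p w] :\ x :\ y :\ z| = 0 by rewrite addn0 addnA.
apply/eqP; rewrite cards_eq0; apply/eqP/setP => w; rewrite !inE.
by case: (w == x); case: (w == y); case: (w == z); rewrite ?andbF.
Qed.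

Section MissingPaths.
Variables (V : finType) (adj : rel V).

Definition adjacent (u v : V) : bool := adj u v || adj v u.

Lemma missingE u v : missing adj u v = (u != v) && ~~ adjacent u v.
Proof. by rewrite /missing /adjacent negb_or. Qed.

Lemma missingC u v : missing adj u v = missing adj v u.
Proof. by rewrite !missingE eq_sym /adjacent orbC. Qed.

Section OneComponent.
Variables (a b c : V).
Hypothesis abc_P3 : missing_P3 adj a b c.

Lemma missing_P3_closed u v :
  u \in [set a; b; c] -> missing adj u v -> v \in [set a; b; c].
Proof.
case: abc_P3 => _ _ _ _ nbrs; rewrite !inE -orbA => /or3P[] /eqP-> muv.
- by have [/(_ muv)-> _] := nbrs v; rewrite eqxx orbT.
- by have [_ [_ /(_ muv) [->|->]]] := nbrs v; rewrite eqxx ?orbT.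
- by have [_ [/(_ muv)-> _]] := nbrs v; rewrite eqxx orbT.
Qed.

Lemma missing_P3_mid v : v \in [set a; b; c] -> v = b \/ missing adj b v.
Proof.
case: abc_P3 => mab mbc _ _ _; rewrite !inE -orbA => /or3P[] /eqP->; [right|left|right] => //.
by rewrite missingC.
Qed.

Lemma card_missing_P3 : #|[set a; b; c]| = 3.
Proof.
case: abc_P3 => /and3P[ab _ _] /and3P[bc _ _] ac _ _.
by rewrite -setUA cardsU1 cards2 bc !inE negb_or ab ac.
Qed.

End OneComponent.

Lemma missing_P3_sub a b c x y z w :
  missing_P3 adj a b c -> missing_P3 adj x y z ->
  w \in [set a; b; c] -> w \in [set x; y; z] -> [set a; b; c] \subset [set x; y; z].
Proof.
move=> abc xyz wS wT.
have bT : b \in [set x; y; z].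
  by have [<-|] := missing_P3_mid abc wS; rewrite // missingC => /(missing_P3_closed xyz wT).
apply/subsetP => v /(missing_P3_mid abc) [->|] //.
exact: (missing_P3_closed xyz bT).
Qed.

Lemma missing_P3_adjacent a b c x y z :
  missing_P3 adj a b c -> missing_P3 adj x y z ->
  [set a; b; c] != [set x; y; z] ->
  {in [set a; b; c] & [set x; y; z], forall u v, adjacent u v}.
Proof.
move=> abc xyz neq u v uS vT.
have vS : v \notin [set a; b; c].
  apply: contra neq => vS; rewrite eqEsubset.
  by rewrite (missing_P3_sub abc xyz vS vT) (missing_P3_sub xyz abc vT vS).
have /negbTE nm : ~~ missing adj u v.
  by apply: contraNN vS; exact: (missing_P3_closed abc uS).
move: nm; rewrite missingE; case: eqP => [uv|_ /negbFE //].
by move: uS vS; rewrite uv => ->.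
Qed.

End MissingPaths.

Section Oriented.
Variables (V : finType) (adj : rel V).
Hypothesis adj_oriented : oriented adj.

Lemma adj_irr x : ~~ adj x x. Proof. by case: adj_oriented. Qed.

Lemma adj_asym x y : adj x y -> ~~ adj y x.
Proof. by case: adj_oriented => _; apply. Qed.

Lemma adj_neq x y : adj x y -> x != y.
Proof. by apply: contraTneq => ->; apply: adj_irr. Qed.

Lemma adjacent_neq u v : adjacent adj u v -> u != v.
Proof. by case/orP => /adj_neq //; rewrite eq_sym. Qed.

Lemma adjacentE u v : adjacent adj u v -> adj v u = ~~ adj u v.
Proof. by case/orP=> h; rewrite h ?(negbTE (adj_asym h)). Qed.

(* The paper's condition q \notin N^+(x) \cup N^{++}(x), in a form that also
   covers q = x. *)
Definition unreachable2 (x q : V) : Prop :=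
  ~~ adj x q /\ forall u, adj x u -> ~~ adj u q.

Lemma unreachable2P x q :
  q \notin outN adj setT x :|: out2N adj setT x -> unreachable2 x q.
Proof.
have [<- _|nxq] := eqVneq x q.
  by split=> [|u]; [apply: adj_irr | apply: adj_asym].
rewrite !inE negb_or => /andP[nxq' n2]; split=> // u xu.
apply: contra n2 => uq; rewrite nxq' eq_sym nxq /=.
by apply/existsP; exists u; rewrite !inE xu.
Qed.

Lemma unreachable2_rev e f : unreachable2 e f -> adjacent adj e f -> adj f e.
Proof. by case=> nef _ /adjacentE ->. Qed.

Lemma unreachable2_out e f u :
  unreachable2 e f -> adjacent adj u f -> adj e u -> adj f u.
Proof. by case=> _ hf /adjacentE-> /hf. Qed.

Definition loses_via (x y p q : V) : Prop :=
  [/\ adj x p, adj y q, unreachable2 x q & unreachable2 y p].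

Lemma loses_labW x y p q : loses_lab adj x y p q -> loses_via x y p q.
Proof. by case/and4P => xp /unreachable2P xq yq /unreachable2P yp. Qed.

Lemma losesCl x y p q : loses adj x y p q = loses adj y x p q.
Proof.
by rewrite /loses; case: (loses_lab adj x y p q); case: (loses_lab adj y x p q);
  case: (loses_lab adj x y q p); case: (loses_lab adj y x q p).
Qed.

Lemma losesCr x y p q : loses adj x y p q = loses adj x y q p.
Proof.
by rewrite /loses; case: (loses_lab adj x y p q); case: (loses_lab adj y x p q);
  case: (loses_lab adj x y q p); case: (loses_lab adj y x q p).
Qed.

(* One labelling has [adj y q], the other [unreachable2 y q]. *)
Lemma loses_cases x y p q : loses adj x y p q ->
  if adj y q then loses_via x y p q else loses_via x y q p.
Proof.
have flip r s t w : loses_via r s t w -> loses_via s r w t by case.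
case/or4P => /loses_labW; [ | move/flip | | move/flip] => h; case: ifP => yq //;
  case: h => _ yq' _ yq''; first [by rewrite yq in yq' | by case: yq''; rewrite yq].
Qed.

Definition parallel_loss (a b c x y z : V) : Prop :=
  [/\ [/\ adj a x, adj a z, adj c x & adj c z], adj b y &
      [/\ unreachable2 a y, unreachable2 c y, unreachable2 b x & unreachable2 b z]].

Definition crossed_loss (a b c x y z : V) : Prop :=
  [/\ [/\ adj a y, adj c y, adj b x & adj b z],
      [/\ unreachable2 a x, unreachable2 a z, unreachable2 c x & unreachable2 c z] &
      unreachable2 b y].

Lemma path_loses_cases a b c x y z : path_loses adj a b c x y z ->
  parallel_loss a b c x y z \/ crossed_loss a b c x y z.
Proof.
case/and4P => /loses_cases l1; rewrite losesCr => /loses_cases l2;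
  rewrite losesCl => /loses_cases l3; rewrite losesCl losesCr => /loses_cases l4.
have [hby|hby] := boolP (adj b y); rewrite ?hby ?(negbTE hby) in l1 l2 l3 l4.
all: move: l1 l2 l3 l4 => [? ? ? ?] [? ? ? ?] [? ? ? ?] [? ? ? ?].
- by left; split => //; split.
- by right; split => //; split.
Qed.

Definition uniform (a b c u : V) : bool :=
  (adj a u == adj c u) && (adj b u == ~~ adj a u).

Definition score (a b c u : V) : nat := (adj a u || adj c u) + adj b u.

Lemma uniform_score a b c u : uniform a b c u -> score a b c u = 1.
Proof. by rewrite /uniform /score; case: (adj a u) (adj b u) (adj c u) => [] [] []. Qed.

Lemma path_loses_score a b c x y z u : path_loses adj a b c x y z ->
  adjacent adj u x -> adjacent adj u y -> adjacent adj u z ->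
  score a b c u <= score x y z u /\
  (score a b c u = 1 -> score x y z u = 1 -> uniform x y z u).
Proof.
move=> /path_loses_cases cases ux uy uz.
have out e f : unreachable2 e f -> adjacent adj u f -> adj e u ==> adj f u.
  by move=> ef uf; apply/implyP; apply: unreachable2_out.
rewrite /score /uniform; case: cases => [[_ _ [ay cy bx bz]] | [_ [ax az cx cz] byy]].
- move: (out _ _ ay uy) (out _ _ cy uy) (out _ _ bx ux) (out _ _ bz uz).
  by case: (adj a u) (adj b u) (adj c u) (adj x u) (adj y u) (adj z u) => [] [] [] [] [] [].
- move: (out _ _ ax ux) (out _ _ az uz) (out _ _ cx ux) (out _ _ cz uz) (out _ _ byy uy).
  by case: (adj a u) (adj b u) (adj c u) (adj x u) (adj y u) (adj z u) => [] [] [] [] [] [].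
Qed.

Lemma path_loses_uniform a b c x y z : path_loses adj a b c x y z ->
  {in [set a; b; c] & [set x; y; z], forall u v, adjacent adj u v} ->
  {in [set x; y; z], forall v, uniform a b c v} /\
  {in [set a; b; c], forall u, uniform x y z u}.
Proof.
move=> /path_loses_cases cases cross.
have rev u : u \in [set a; b; c] -> {in [set x; y; z], forall v, adj v u = ~~ adj u v}.
  by move=> uS v vT; apply/adjacentE/cross.
split=> [v vT | u uS]; [move: vT | rewrite /uniform !(rev u uS) ?inE ?eqxx ?orbT //; move: uS].
all: rewrite !inE -orbA /uniform => /or3P[] /eqP->.
all: case: cases => [[[ax az cx cz] byy [[nay _] [ncy _] [nbx _] [nbz _]]]
                   | [[ay cy bx bz] [[nax _] [naz _] [ncx _] [ncz _]] [nby _]]].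
all: by rewrite ?ax ?az ?cx ?cz ?byy ?ay ?cy ?bx ?bz ?(negbTE nax) ?(negbTE naz)
  ?(negbTE ncx) ?(negbTE ncz) ?(negbTE nay) ?(negbTE ncy) ?(negbTE nbx) ?(negbTE nbz)
  ?(negbTE nby).
Qed.

Lemma card_out_uniform x y z u : x != y -> x != z -> y != z ->
  adjacent adj u x -> adjacent adj u y -> adjacent adj u z -> uniform x y z u ->
  #|[set w in [set x; y; z] | adj u w]| = 1 + adj u x.
Proof.
move=> xy xz yz /adjacentE ux /adjacentE uy /adjacentE uz /andP[/eqP xzu /eqP yxu].
rewrite card_sep3 //; move: xzu yxu; rewrite ux uy uz.
by case: (adj u x) (adj u y) (adj u z) => [] [] [].
Qed.

Lemma mem_out2N (S : {set V}) e u v : v \in S -> u \in outN adj S e -> adj u v ->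
  ~~ adj e v -> v != e -> v \in out2N adj S e.
Proof.
move=> vS uN uv nev ve; rewrite inE vS ve /= inE vS /= nev /=.
by apply/existsP; exists u; rewrite uN.
Qed.

(* If [f] dominates [e] (and [e'] above it) while [e] cannot reach [f], every
   out-neighbour of [e] except the unique non-neighbour [g] of [f] is an
   out-neighbour of [f]; [e] and [e'] are two more. *)
Lemma outN_card_lt (S : {set V}) e e' f g : e \in S -> e' \in S -> adj e' e ->
  unreachable2 e f -> adj f e -> adj f e' -> adj e g ->
  (forall v, missing adj f v -> v = g) -> #|outN adj S e| < #|outN adj S f|.
Proof.
move=> eS e'S e'e [nef ef] fe fe' eg fg.
have sub : (outN adj S e :\ g) :|: [set e; e'] \subset outN adj S f.
  apply/subsetP => v; rewrite !inE => /orP[/and3P[vg vS ev] | /orP[] /eqP->];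
    rewrite ?eS ?e'S ?fe ?fe' // vS /=.
  have vf : v != f by apply: contraNneq nef => <-.
  have : ~~ missing adj f v by apply: contra vg => /fg/eqP.
  rewrite missingE eq_sym vf negbK => /orP[// | vf'].
  by have := ef v ev; rewrite vf'.
have disj : {in outN adj S e :\ g, forall v, v \notin [set e; e']}.
  move=> v; rewrite !inE => /and3P[_ _ ev]; apply/norP; split.
  - by apply: contraTneq ev => ->; apply: adj_irr.
  - by apply: contraTneq ev => ->; apply: adj_asym.
have := card_disjointU_sub disj sub; rewrite cards2 eq_sym (adj_neq e'e).
by rewrite (cardsD1 g (outN adj S e)); case: (g \in _) => /=; lia.
Qed.

End Oriented.

Section DoubleCycle.
Variables (V : finType) (adj : rel V) (k : nat) (a b c : nat -> V).
Hypotheses (adj_oriented : oriented adj) (cycle_C : double_cycle adj k a b c).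

Let k_gt1 : 1 < k. Proof. by case: cycle_C. Qed.

Let comp_P3 i : i < k -> missing_P3 adj (a i) (b i) (c i).
Proof. by case: cycle_C => _ + _ _; apply. Qed.

Definition comp i := [set a i; b i; c i].
Definition succ i := i.+1 %% k.

Local Notation K := (KC k a b c).
Local Notation uniform_to i := (uniform adj (a i) (b i) (c i)).
Local Notation score_to i := (score adj (a i) (b i) (c i)).

Let loses_succ i : i < k ->
  path_loses adj (a i) (b i) (c i) (a (succ i)) (b (succ i)) (c (succ i)).
Proof. by case: cycle_C => _ _ _; apply. Qed.

Lemma a_comp i : a i \in comp i. Proof. by rewrite !inE eqxx. Qed.
Lemma b_comp i : b i \in comp i. Proof. by rewrite !inE eqxx orbT. Qed.
Lemma c_comp i : c i \in comp i. Proof. by rewrite !inE eqxx !orbT. Qed.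

Lemma succ_lt i : succ i < k.
Proof. by rewrite ltn_mod; lia. Qed.

Lemma succ_neq i : i < k -> succ i != i.
Proof.
move=> ik; have := k_gt1; rewrite /succ modn_lt_double; last lia.
by case: ifP => h; lia.
Qed.

Lemma comp_adjacent i j : i < k -> j < k -> i != j ->
  {in comp i & comp j, forall u v, adjacent adj u v}.
Proof.
move=> ik jk ij; apply: missing_P3_adjacent (comp_P3 ik) (comp_P3 jk) _.
by case: cycle_C => _ _ /(_ i j ik jk ij).
Qed.

Lemma comp_notin i j u : i < k -> j < k -> i != j -> u \in comp i -> u \notin comp j.
Proof.
move=> ik jk ij ui; apply/negP => /(comp_adjacent ik jk ij ui).
by move/(adjacent_neq adj_oriented); rewrite eqxx.
Qed.

Lemma comp_K j v : j < k -> v \in comp j -> v \in K.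
Proof. by move=> jk; rewrite !inE -orbA => vj; apply/existsP; exists (Ordinal jk). Qed.

Lemma K_comp v : v \in K -> exists2 j, j < k & v \in comp j.
Proof. by rewrite inE => /existsP[j vj]; exists j; rewrite // !inE -orbA. Qed.

Lemma uniform_succ i : i < k ->
  {in comp (succ i), forall v, uniform_to i v} /\
  {in comp i, forall u, uniform_to (succ i) u}.
Proof.
move=> ik; apply: (path_loses_uniform adj_oriented (loses_succ ik)).
by apply: comp_adjacent; rewrite ?succ_lt // eq_sym succ_neq.
Qed.

Lemma score_succ i j u : i < k -> j < k -> succ i != j -> u \in comp j ->
  score_to i u <= score_to (succ i) u /\
  (score_to i u = 1 -> score_to (succ i) u = 1 -> uniform_to (succ i) u).
Proof.
move=> ik jk ij uj; have ji : j != succ i by rewrite eq_sym.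
have adj_u := comp_adjacent jk (succ_lt i) ji uj.
by apply: (path_loses_score adj_oriented (loses_succ ik)); apply: adj_u;
  rewrite ?a_comp ?b_comp ?c_comp.
Qed.

(* Walking once around the cycle from [j], the score of [u] never decreases;
   it is 1 just after [j] and just before [j], hence 1 everywhere. *)
Lemma uniform_other i j u : i < k -> j < k -> i != j -> u \in comp j -> uniform_to i u.
Proof.
move=> ik jk ij uj; have k1 := k_gt1.
pose idx r := (j + r) %% k.
have succ_idx r : succ (idx r) = idx r.+1 by rewrite /succ /idx -addn1 modnDml addn1 addnS.
have idx_neq r : 0 < r < k -> idx r != j.
  by move=> /andP[r0 rk]; rewrite /idx modn_lt_double; [case: ifP => h; lia | lia].
have step r : 0 < r -> r.+1 < k -> score_to (idx r) u <= score_to (idx r.+1) u /\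
    (score_to (idx r) u = 1 -> score_to (idx r.+1) u = 1 -> uniform_to (idx r.+1) u).
  move=> r0 rk; rewrite -succ_idx; apply: score_succ uj => //; first by rewrite ltn_mod; lia.
  by rewrite succ_idx idx_neq //; lia.
have mono r s : 0 < r <= s -> s < k -> score_to (idx r) u <= score_to (idx s) u.
  elim: s => [|s IH] /andP[r0]; first lia.
  rewrite leq_eqVlt => /orP[/eqP<- // | rs] sk.
  by apply: leq_trans (IH _ _) (step s _ sk).1; lia.
have uniform1 : uniform_to (idx 1) u.
  have -> : idx 1 = succ j by rewrite /idx addn1.
  by have [_] := uniform_succ jk; apply.
have score_last : score_to (idx k.-1) u = 1.
  have pk : idx k.-1 < k by rewrite ltn_mod; lia.
  apply: uniform_score; have [+ _] := uniform_succ pk; apply.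
  by rewrite succ_idx prednK ?/idx ?modnDr ?modn_small //; lia.
have score1 r : 0 < r < k -> score_to (idx r) u = 1.
  move=> /andP[r0 rk]; apply/eqP; rewrite eqn_leq -{1}score_last -(uniform_score uniform1).
  by rewrite !mono //; lia.
have [r /andP[r0 rk] ->] := modn_offset ik jk ij; rewrite -/(idx r).
case: r r0 rk => [// | [_ _ | r _ rk]]; first exact: uniform1.
by apply: (step r.+1 (ltn0Sn r) rk).2; apply: score1; lia.
Qed.

Definition sink i := if adj (c i) (a i) then a i else c i.
Definition source i := if adj (c i) (a i) then c i else a i.

Lemma sink_source i :
  (sink i = a i /\ source i = c i) \/ (sink i = c i /\ source i = a i).
Proof. by rewrite /sink /source; case: ifP; [left | right]. Qed.

Lemma comp_sink i : comp i = [set sink i; b i; source i].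
Proof.
apply/setP => v; rewrite !inE.
by case: (sink_source i) => [] [-> ->]; case: (v == a i) (v == b i) (v == c i) => [] [] [].
Qed.

Lemma sink_comp i : sink i \in comp i.
Proof. by rewrite comp_sink !inE eqxx. Qed.

Lemma source_comp i : source i \in comp i.
Proof. by rewrite comp_sink !inE eqxx !orbT. Qed.

Lemma source_sink i : i < k -> adj (source i) (sink i).
Proof.
move=> ik; case: (comp_P3 ik) => _ _ ac nac _.
have : adjacent adj (a i) (c i) by apply: contraNT nac => nadj; rewrite missingE ac.
by rewrite /sink /source /adjacent; case: ifP => ca; rewrite ?ca ?orbF.
Qed.

Lemma sink_missing i v : i < k -> missing adj (sink i) v -> v = b i.
Proof.
move=> ik; case: (comp_P3 ik) => _ _ _ _ /(_ v) [ma [mc _]].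
by case: (sink_source i) => [] [-> _].
Qed.

Lemma sink_b i : i < k -> missing adj (sink i) (b i).
Proof.
move=> ik; case: (comp_P3 ik) => ab bc _ _ _.
by case: (sink_source i) => [] [-> _]; rewrite // missingC.
Qed.

Lemma uniform_sink i u : uniform_to i u -> uniform adj (sink i) (b i) (source i) u.
Proof.
rewrite /uniform => /andP[/eqP ac /eqP ba].
by case: (sink_source i) => [] [-> ->]; rewrite ba ac !eqxx.
Qed.

Definition out_to i j := #|[set w in comp j | adj (sink i) w]|.

Lemma out_to_eq i j : i < k -> j < k -> i != j ->
  out_to i j = 1 + adj (sink i) (sink j).
Proof.
move=> ik jk ij; have adj_i := comp_adjacent ik jk ij (sink_comp i).
rewrite /out_to comp_sink; case: (comp_P3 jk) => /and3P[ab _ _] /and3P[bc _ _] ac _ _.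
apply: card_out_uniform => //.
1-3: by case: (sink_source j) => [] [E1 E2]; rewrite ?E1 ?E2 // eq_sym.
1-3: by apply: adj_i; rewrite comp_sink !inE eqxx ?orbT.
by apply/uniform_sink/(uniform_other jk ik); rewrite 1?eq_sym ?sink_comp.
Qed.

Lemma card_sep_K (p : pred V) :
  #|[set w in K | p w]| = \sum_(j < k) #|[set w in comp j | p w]|.
Proof.
have -> : [set w in K | p w] = \bigcup_(j < k) [set w in comp j | p w].
  apply/setP => v; rewrite !inE; apply/andP/bigcupP => [[/existsP[j vj] pv] | [j _]].
    by exists j; rewrite // !inE pv -orbA vj.
  by rewrite !inE -orbA => /andP[vj pv]; split=> //; apply/existsP; exists j.
rewrite -sum1_card partition_disjoint_bigcup => [|i j ij].
  by apply: eq_bigr => j _; rewrite sum1_card.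
rewrite -setI_eq0 -subset0; apply/subsetP => v /setIP[/setIdP[vi _] /setIdP[vj _]].
by have := comp_notin (ltn_ord i) (ltn_ord j) ij vi; rewrite vj.
Qed.

Lemma card_comp j : j < k -> #|comp j| = 3.
Proof. by move/comp_P3/card_missing_P3. Qed.

Lemma card_K : #|K| = 3 * k.
Proof.
have -> : K = [set w in K | predT w] by apply/setP => v; rewrite inE andbT.
rewrite card_sep_K (eq_bigr (fun=> 3)) => [|j _]; first by rewrite sum_nat_const card_ord mulnC.
by rewrite -(card_comp (ltn_ord j)); apply: eq_card => v; rewrite inE andbT.
Qed.

Lemma sum_outN_sink : 2 * \sum_(i < k) #|outN adj K (sink i)| = 3 * (k * k.-1).
Proof.
rewrite (eq_bigr (fun i : 'I_k => \sum_(j < k) out_to i j)) => [|i _]; last exact: card_sep_K.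
apply: sum_pairs_const => [i ik | i j ik jk ij].
  apply/eqP; rewrite cards_eq0; apply/eqP/setP => w; rewrite comp_sink !inE -orbA.
  apply/negP => /andP[/or3P[] /eqP-> ]; apply/negP.
  - exact: adj_irr.
  - by case/and3P: (sink_b ik).
  - exact: adj_asym (source_sink ik).
have ji : j != i by rewrite eq_sym.
rewrite !out_to_eq //; case/orP: (comp_adjacent ik jk ij (sink_comp i) (sink_comp j)) => h.
- by rewrite h (negbTE (adj_asym adj_oriented h)).
- by rewrite h (negbTE (adj_asym adj_oriented h)).
Qed.

Lemma sink_witness i : i < k ->
  exists2 w, w \in comp (succ i) & adj (sink i) w /\ unreachable2 adj (b i) w.
Proof.
move=> ik; case: (path_loses_cases adj_oriented (loses_succ ik)).
- case=> [[ax _ cx _] _ [_ _ bx _]]; exists (a (succ i)); first exact: a_comp.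
  by case: (sink_source i) => [] [-> _].
- case=> [[ay cy _ _] _ by_]; exists (b (succ i)); first exact: b_comp.
  by case: (sink_source i) => [] [-> _].
Qed.

Definition rest i := [set v in K | (v \notin comp i) && (v \notin comp (succ i))].

Lemma out2N_sink_sup i : i < k ->
  b i |: (rest i :\: outN adj K (sink i)) \subset out2N adj K (sink i).
Proof.
move=> ik; have [w wn [sw bw]] := sink_witness ik.
have wN : w \in outN adj K (sink i) by rewrite inE (comp_K (succ_lt i) wn) sw.
have isi : i != succ i by rewrite eq_sym succ_neq.
apply/subsetP => v /setU1P[-> | /setDP[/setIdP[vK /andP[vi vn]] vN]].
- apply: (mem_out2N (comp_K ik (b_comp i)) wN).
  + apply: (unreachable2_rev adj_oriented bw).
    exact: (comp_adjacent ik (succ_lt i) isi (b_comp i) wn).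
  + by case/and3P: (sink_b ik).
  + by case/and3P: (sink_b ik); rewrite eq_sym.
- have [j jk vj] := K_comp vK.
  have ij : i != j by apply: contraNneq vi => ->.
  have nj : j != succ i by apply: contraNneq vn => <-.
  have sv : ~~ adj (sink i) v by apply: contra vN => sv; apply/setIdP.
  have bv : adj (b i) v.
    by case/andP: (uniform_sink (uniform_other ik jk ij vj)) => _ /eqP->.
  have wv : adj w v.
    apply: (unreachable2_out adj_oriented bw _ bv).
    exact: (comp_adjacent jk (succ_lt i) nj vj wn).
  apply: (mem_out2N vK wN wv sv).
  by apply: contraNneq vi => ->; apply: sink_comp.
Qed.

(* Of the [3 * k] vertices of [K], all but the six in paths [i] and [succ i] lie in
   [rest i]. *)
Lemma out2N_sink_lower i : i < k ->
  3 * k + out_to i (succ i) <= #|out2N adj K (sink i)| + #|outN adj K (sink i)| + 5.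
Proof.
move=> ik; set N := outN adj K (sink i).
have out_succ : #|rest i :&: N| + out_to i (succ i) <= #|N|.
  apply: card_disjointU_sub => [v /setIP[/setIdP[_ /andP[_ vn]] _] |].
    by apply: contra vn => /setIdP[].
  apply/subsetP => v /setUP[/setIP[] // | /setIdP[vn sv]].
  by apply/setIdP; rewrite (comp_K (succ_lt i) vn).
have out2 : (#|rest i :\: N|).+1 <= #|out2N adj K (sink i)|.
  apply: leq_trans (subset_leq_card (out2N_sink_sup ik)).
  rewrite cardsU1 (_ : b i \notin _) //.
  by apply/negP => /setDP[/setIdP[_ /andP[/negP bi _]] _]; apply: bi (b_comp i).
have K_rest : K \subset rest i :|: comp i :|: comp (succ i).
  apply/subsetP => v vK; apply/setUP.
  have [vn | vn] := boolP (v \in comp (succ i)); [by right | left; apply/setUP].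
  have [vi | vi] := boolP (v \in comp i); [by right | left].
  by apply/setIdP; rewrite vK vi vn.
have card_K_rest : #|K| <= #|rest i| + 6.
  apply: leq_trans (subset_leq_card K_rest) _.
  apply: leq_trans (leq_card_setU _ _) _; rewrite card_comp ?succ_lt //.
  apply: leq_trans (leq_add (leq_card_setU _ _) (leqnn 3)) _.
  by rewrite card_comp // -addnA.
move: (cardsID N (rest i)); rewrite card_K in card_K_rest; lia.
Qed.

Lemma outN_sink_lt_succ i : i < k -> ~~ adj (sink i) (sink (succ i)) ->
  #|outN adj K (sink i)| < #|outN adj K (sink (succ i))|.
Proof.
move=> ik nss; have si := succ_lt i; have isi : i != succ i by rewrite eq_sym succ_neq.
case: (path_loses_cases adj_oriented (loses_succ ik))
  => [[[ax az cx cz] _ _] | [[ay cy _ _] unr _]].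
  by move: nss; case: (sink_source i) => [] [-> _];
    case: (sink_source (succ i)) => [] [-> _]; rewrite ?ax ?az ?cx ?cz.
have unr_f x : x = a i \/ x = c i -> unreachable2 adj x (sink (succ i)).
  by case: unr => ? ? ? ?; case: (sink_source (succ i)) => [] [-> _] [] ->.
have f_beats x : x \in comp i -> unreachable2 adj x (sink (succ i)) -> adj (sink (succ i)) x.
  move=> xi /(unreachable2_rev adj_oriented); apply.
  exact: (comp_adjacent ik si isi xi (sink_comp _)).
have [ei ei'] : (sink i = a i \/ sink i = c i) /\ (source i = a i \/ source i = c i).
  by case: (sink_source i) => [] [-> ->]; auto.
apply: (outN_card_lt adj_oriented (g := b (succ i)) _ _ (source_sink ik) (unr_f _ ei)).
- exact: (comp_K ik (sink_comp i)).
- exact: (comp_K ik (source_comp i)).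
- exact: (f_beats _ (sink_comp i) (unr_f _ ei)).
- exact: (f_beats _ (source_comp i) (unr_f _ ei')).
- by case: ei => ->.
- by move=> v; apply: sink_missing.
Qed.

Lemma exists_sink_outN_le_out2N :
  exists2 s, s < k & #|outN adj K (sink s)| <= #|out2N adj K (sink s)|.
Proof.
have k0 : 0 < k by apply: ltnW.
pose d i := #|outN adj K (sink i)|.
have [m _ m_min] := @arg_minnP _ (Ordinal k0) predT (fun i : 'I_k => d i) isT.
have total : k * (3 * k.-1) = 2 * \sum_(i < k) d i by rewrite mulnCA sum_outN_sink.
have low := out2N_sink_lower (ltn_ord m); rewrite -/(d m) in low.
exists m => //; rewrite -/(d m); rewrite out_to_eq ?succ_lt 1?eq_sym ?succ_neq // in low.
have [ss | nss] := boolP (adj (sink m) (sink (succ m))).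
  have avg : k * (2 * d m) <= k * (3 * k.-1).
    rewrite total mulnCA leq_mul2l /= -[k in k * _]card_ord -sum_nat_const.
    by apply: leq_sum => i _; apply: m_min.
  by rewrite ss /= in low; rewrite leq_pmul2l // in avg; lia.
have avg : k * (2 * d m) < k * (3 * k.-1).
  rewrite total mulnCA ltn_mul2l /= -[k in k * _]card_ord -sum_nat_const.
  rewrite (bigD1 (Ordinal (succ_lt m))) //= [X in _ < X](bigD1 (Ordinal (succ_lt m))) //=.
  rewrite -addSn leq_add ?outN_sink_lt_succ //.
  by apply: leq_sum => i _; apply: m_min.
by rewrite (negbTE nss) /= in low; rewrite ltn_pmul2l // in avg; lia.
Qed.

End DoubleCycle.

Theorem proposition4p11 (V : finType) (adj : rel V) :
  tournament_missing_disjoint_P2 adj ->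
  forall (k : nat) (a b c : nat -> V),
    double_cycle adj k a b c ->
    exists2 s, s < k &
      (#|outN adj (KC k a b c) (a s)| <= #|out2N adj (KC k a b c) (a s)|) \/
      (#|outN adj (KC k a b c) (c s)| <= #|out2N adj (KC k a b c) (c s)|).
Proof.
move=> [oriented_adj _] k a b c cycle_C.
have [s sk le_s] := exists_sink_outN_le_out2N oriented_adj cycle_C.
by exists s => //; case: (sink_source adj a c s) => [] [sink_s _]; rewrite sink_s in le_s; auto.
Qed.
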